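(* Let $G=(V,E,(p_{uv})_{(u,v)\in E})$ be an influence graph. For every $S\subseteq V$, $\sigma^2(S)\le 2\,\sigma(S)$.
   Context: $G$ is a directed graph with activation probabilities $p_{uv}\in[0,1]$. $\mathbf L$ and $\hat{\mathbf L}$ are independent random subsets of $E$, each containing every edge $(u,v)$ independently with probability $p_{uv}$ (live-edge graphs). For $L\subseteq E$ and $S\subseteq V$, $\sigma_L(S)$ is the number of nodes reachable by a directed path (of length $\ge0$) in $(V,L)$ from some node of $S$, and $\sigma(S):=\mathbb{E}[\sigma_{\mathbf L}(S)]$. For $S\subseteq V$, the 2-level live-edge graph is $\mathbf L^2(S):=\mathbf L\cup(\hat{\mathbf L}\cap\{(u,v)\in E:u\in S\})$, and $\sigma^2(S):=\mathbb{E}_{\mathbf L,\hat{\mathbf L}}[\sigma_{\mathbf L^2(S)}(S)]$. *)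

From HB Require Import structures.
From mathcomp Require Import all_boot all_order all_algebra.
Set Implicit Arguments. Unset Strict Implicit. Unset Printing Implicit Defensive.
Import Order.TTheory GRing.Theory Num.Theory.
Local Open Scope ring_scope.

Section Influence.
Variables (R : realFieldType) (V : finType).

Definition live_rel (L : {set V * V}) : rel V := fun u v => (u, v) \in L.

Definition sigmaL (L : {set V * V}) (S : {set V}) : nat :=
  #|[set v | [exists u in S, connect (live_rel L) u v]]|.

Definition live_prob (E : {set V * V}) (p : V * V -> R) (L : {set V * V}) : R :=
  \prod_(e in E) (if e \in L then p e else 1 - p e).

Definition sigma (E : {set V * V}) (p : V * V -> R) (S : {set V}) : R :=
  \sum_(L : {set V * V} | L \subset E) live_prob E p L * (sigmaL L S)%:R.

Definition L2 (E L Lh : {set V * V}) (S : {set V}) : {set V * V} :=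
  L :|: (Lh :&: [set e in E | e.1 \in S]).

Definition sigma2 (E : {set V * V}) (p : V * V -> R) (S : {set V}) : R :=
  \sum_(L : {set V * V} | L \subset E)
    \sum_(Lh : {set V * V} | Lh \subset E)
      live_prob E p L * live_prob E p Lh * (sigmaL (L2 E L Lh S) S)%:R.

End Influence.

(* A node reachable from S in L ∪ L̂_S, where L̂_S are the edges of L̂ leaving S,
   is reachable from S either in L or in M = L̂_S ∪ (L minus its edges leaving S):
   follow a path from its last visit to S. Exchanging the edges leaving S between
   L and L̂ preserves the joint law of the independent pair (L, L̂), so M has the
   law of L and the expected reach in M is again σ(S). *)
From HB Require Import structures.
From mathcomp Require Import all_boot all_order all_algebra.
Set Implicit Arguments. Unset Strict Implicit. Unset Printing Implicit Defensive.
Import Order.TTheory GRing.Theory Num.Theory.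
Local Open Scope ring_scope.

Section LiveEdge.
Variables (R : realFieldType) (V : finType).
Implicit Types (E L Lh A B : {set V * V}) (S : {set V}) (p : V * V -> R).

Lemma live_prob_ge0 E p L :
  (forall e, e \in E -> 0 <= p e <= 1) -> 0 <= live_prob E p L.
Proof.
move=> hp; apply: prodr_ge0 => e eE; have /andP[p_ge0 p_le1] := hp e eE.
by case: (e \in L); rewrite ?subr_ge0.
Qed.

Lemma live_prob_sum1 E p : \sum_(L : {set V * V} | L \subset E) live_prob E p L = 1.
Proof.
pose q e := if e \in E then p e else 0.
pose q' e := if e \in E then 1 - p e else 1.
have prod1 : \prod_(e : V * V) (q e + q' e) = 1.
  by apply: big1 => e _; rewrite /q /q'; case: (e \in E); rewrite ?subrKC ?add0r.
rewrite bigA_distr /= in prod1; rewrite -{}prod1.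
rewrite [RHS](bigID (fun L : {set V * V} => L \subset E)) /= [X in _ + X]big1 ?addr0.
  apply: eq_bigr => L /subsetP sLE; rewrite /live_prob big_mkcond /=.
  apply: eq_bigr => e _; rewrite /q /q'.
  by case: (boolP (e \in E)) => // eE; case: (boolP (e \in L)) => // /sLE; rewrite (negbTE eE).
by move=> L /subsetPn [e eL eE]; rewrite (bigD1 e) //= eL /q (negbTE eE) mul0r.
Qed.

Definition swap_out S L Lh : {set V * V} :=
  [set e in Lh | e.1 \in S] :|: [set e in L | e.1 \notin S].

Definition swap_out_pair S (q : {set V * V} * {set V * V}) :=
  (swap_out S q.1 q.2, swap_out S q.2 q.1).

Lemma swap_outK S L Lh : swap_out S (swap_out S L Lh) (swap_out S Lh L) = L.
Proof.
apply/setP => e; rewrite !inE.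
by case: (e.1 \in S); rewrite ?andbT ?andbF ?orbF.
Qed.

Lemma swap_out_pairK S : involutive (swap_out_pair S).
Proof. by move=> [L Lh]; rewrite /swap_out_pair /= !swap_outK. Qed.

Lemma swap_out_sub E S L Lh : L \subset E -> Lh \subset E -> swap_out S L Lh \subset E.
Proof.
move=> /subsetP sLE /subsetP sLhE; apply/subsetP => e.
by rewrite !inE => /orP[/andP[/sLhE] | /andP[/sLE]].
Qed.

Lemma live_prob_swap_out E p S L Lh :
  live_prob E p (swap_out S L Lh) * live_prob E p (swap_out S Lh L)
  = live_prob E p L * live_prob E p Lh.
Proof.
rewrite /live_prob -!big_split /=; apply: eq_bigr => e _; rewrite !inE.
by case: (e.1 \in S); rewrite ?andbT ?andbF ?orbF // mulrC.
Qed.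

Lemma sum_live_pair_swap_out E p S (f : {set V * V} * {set V * V} -> R) :
  \sum_(L : {set V * V} | L \subset E) \sum_(Lh : {set V * V} | Lh \subset E)
     live_prob E p L * live_prob E p Lh * f (swap_out_pair S (L, Lh))
  = \sum_(L : {set V * V} | L \subset E) \sum_(Lh : {set V * V} | Lh \subset E)
     live_prob E p L * live_prob E p Lh * f (L, Lh).
Proof.
rewrite !pair_big_dep (reindex_inj (inv_inj (swap_out_pairK S))) /=.
apply: eq_big => [[L Lh] | [L Lh] _] /=; last first.
  by rewrite live_prob_swap_out -[in RHS](swap_out_pairK S (L, Lh)).
apply/andP/andP => [[sL sLh] | [sL sLh]]; last by rewrite !swap_out_sub.
by split; [rewrite -(swap_outK S L Lh) | rewrite -(swap_outK S Lh L)]; apply: swap_out_sub.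
Qed.

Lemma connect_live_sub A B x y :
  A \subset B -> connect (live_rel A) x y -> connect (live_rel B) x y.
Proof. by move=> /subsetP sAB; apply: connect_sub => u v /sAB; apply: connect1. Qed.

Lemma sigmaL_mono A B S : A \subset B -> (sigmaL A S <= sigmaL B S)%N.
Proof.
move=> sAB; apply/subset_leq_card/subsetP => v; rewrite !inE.
case/existsP => u /andP[uS cuv]; apply/existsP; exists u.
by rewrite uS (connect_live_sub sAB cuv).
Qed.

Lemma connect_exit_split A B S x y :
  connect (live_rel (A :|: [set e in B | e.1 \in S])) x y ->
  connect (live_rel [set e in A | e.1 \notin S]) x y \/
  exists2 s, s \in S & connect (live_rel A) s y || connect (live_rel (swap_out S A B)) s y.
Proof.
set A' := [set e in A | e.1 \notin S].
have sA'A : A' \subset A by apply/subsetP => e; rewrite inE => /andP[].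
have sA'M : A' \subset swap_out S A B by apply: subsetUr.
move=> /connectP [q + ->] {y}; elim: q x => [|z q IH] x /=; first by left.
case/andP => exz /IH [cz | ]; last by right.
have [xS | xNS] := boolP (x \in S).
  right; exists x => //; move: exz; rewrite /live_rel in_setU => /orP[xzA | xzB].
    have cxz : connect (live_rel A) x z by apply: connect1.
    by rewrite (connect_trans cxz (connect_live_sub sA'A cz)).
  have cxz : connect (live_rel (swap_out S A B)) x z by apply: connect1; rewrite /live_rel inE xzB.
  by rewrite (connect_trans cxz (connect_live_sub sA'M cz)) orbT.
left; apply: connect_trans cz; apply: connect1.
by move: exz; rewrite /live_rel !inE /= (negbTE xNS) andbF orbF andbT.
Qed.

Lemma sigmaL_setU_out A B S :
  (sigmaL (A :|: [set e in B | e.1 \in S]) S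
   <= sigmaL A S + sigmaL (swap_out S A B) S)%N.
Proof.
apply: leq_trans (leq_card_setU _ _); apply/subset_leq_card/subsetP => v.
rewrite !inE => /existsP[u /andP[uS /connect_exit_split [cuv | [s sS]]]].
  have sA'A : [set e in A | e.1 \notin S] \subset A.
    by apply/subsetP => e; rewrite inE => /andP[].
  by apply/orP; left; apply/existsP; exists u; rewrite uS (connect_live_sub sA'A cuv).
by case/orP => csv; apply/orP; [left | right]; apply/existsP; exists s; rewrite sS.
Qed.

Lemma sigmaL_L2 E L Lh S :
  (sigmaL (L2 E L Lh S) S <= sigmaL L S + sigmaL (swap_out S L Lh) S)%N.
Proof.
apply: leq_trans (sigmaL_setU_out L Lh S); apply/sigmaL_mono/setUS/subsetP => e.
by rewrite !inE => /andP[-> /andP[_ ->]].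
Qed.

End LiveEdge.

Theorem lemma7 (R : realFieldType) (V : finType) (E : {set V * V})
  (p : V * V -> R) (hp : forall e, e \in E -> 0 <= p e <= 1) (S : {set V}) :
  sigma2 E p S <= 2 * sigma E p S.
Proof.
set w := live_prob E p.
pose sum2 (f : {set V * V} * {set V * V} -> R) :=
  \sum_(L : {set V * V} | L \subset E) \sum_(Lh : {set V * V} | Lh \subset E)
     w L * w Lh * f (L, Lh).
have sigmaE : sigma E p S = sum2 (fun q => (sigmaL q.1 S)%:R).
  apply: eq_bigr => L _; rewrite -[LHS]mulr1 -(live_prob_sum1 E p) mulr_sumr.
  by apply: eq_bigr => Lh _; rewrite mulrAC.
have swapE : sum2 (fun q => (sigmaL (swap_out_pair S q).1 S)%:R) = sigma E p S.
  by rewrite sigmaE /sum2 (sum_live_pair_swap_out E p S (fun q => (sigmaL q.1 S)%:R)).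
apply: le_trans (_ : _ <= sum2 (fun q => (sigmaL q.1 S)%:R)
                        + sum2 (fun q => (sigmaL (swap_out_pair S q).1 S)%:R)) _.
  rewrite /sum2 -big_split /=; apply: ler_sum => L _.
  rewrite -big_split /=; apply: ler_sum => Lh _; rewrite -mulrDr -natrD.
  by rewrite ler_wpM2l ?mulr_ge0 ?live_prob_ge0 // ler_nat sigmaL_L2.
by rewrite swapE -sigmaE -[2]/(1 + 1) mulrDl mul1r.
Qed.
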